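(* Let $(\mathcal T(n))_{n\in\mathbb N}$ be the triangle Markov chain obtained by iterated random barycentric subdivision started from an arbitrary triangle, and let $J_n=J(\mathcal T(n))$. Then almost surely $\limsup_{n\to\infty}J_n=+\infty$.
   Context: A triangle is given by three points of the plane which are not all equal. Barycentric subdivision: if a triangle has vertices $A,B,C$, let $D,E,F$ be the midpoints of $[A,B],[B,C],[C,A]$ and $G$ its barycenter; the medians cut it into the six triangles $\{A,D,G\},\{D,B,G\},\{B,E,G\},\{E,C,G\},\{C,F,G\},\{F,A,G\}$. The triangle Markov chain: $\mathcal T(0)$ is given and $\mathcal T(n+1)$ is chosen uniformly among the six triangles of the barycentric subdivision of $\mathcal T(n)$, independently of the past. For a triangle $\mathcal T$, $J(\mathcal T)\in(0,+\infty]$ is the sum of the squares of the lengths of its three edges divided by its area (with $J(\mathcal T)=+\infty$ iff $\mathcal T$ is flat, i.e. has zero area). *)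

From HB Require Import structures.
From mathcomp Require Import all_boot all_order all_algebra.
From mathcomp Require Import all_classical all_reals all_analysis.
Set Implicit Arguments. Unset Strict Implicit. Unset Printing Implicit Defensive.
Import Order.TTheory GRing.Theory Num.Theory.
Local Open Scope classical_set_scope.
Local Open Scope ring_scope.

Section Triangles.
Variable R : realType.

Definition point := (R * R)%type.
Definition triangle := (point * point * point)%type.

Definition tA (t : triangle) : point := t.1.1.
Definition tB (t : triangle) : point := t.1.2.
Definition tC (t : triangle) : point := t.2.

Definition not_all_equal (t : triangle) : Prop :=
  ~ (tA t = tB t /\ tB t = tC t).

Definition midpoint (p q : point) : point := ((p.1 + q.1) / 2, (p.2 + q.2) / 2).
Definition barycenter (t : triangle) : point :=
  (((tA t).1 + (tB t).1 + (tC t).1) / 3, ((tA t).2 + (tB t).2 + (tC t).2) / 3).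

Definition sqdist (p q : point) : R := (p.1 - q.1) ^+ 2 + (p.2 - q.2) ^+ 2.

Definition area (t : triangle) : R :=
  `| ((tB t).1 - (tA t).1) * ((tC t).2 - (tA t).2)
     - ((tC t).1 - (tA t).1) * ((tB t).2 - (tA t).2) | / 2.

Definition J (t : triangle) : \bar R :=
  if area t == 0 then +oo%E
  else ((sqdist (tA t) (tB t) + sqdist (tB t) (tC t) + sqdist (tC t) (tA t))
          / area t)%:E.

Definition subdiv (t : triangle) (k : 'I_6) : triangle :=
  let A := tA t in let B := tB t in let C := tC t in
  let D := midpoint A B in let E := midpoint B C in let F := midpoint C A in
  let G := barycenter t in
  match val k with
  | 0 => (A, D, G)
  | 1 => (D, B, G)
  | 2 => (B, E, G)
  | 3 => (E, C, G)
  | 4 => (C, F, G)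
  | _ => (F, A, G)
  end.

Fixpoint chain (T0 : triangle) (xi : nat -> 'I_6) (n : nat) : triangle :=
  match n with
  | 0 => T0
  | n'.+1 => subdiv (chain T0 xi n') (xi n')
  end.

End Triangles.

(* xi : nat -> Omega -> 'I_6 is an i.i.d. sequence of uniform choices in
   {0,...,5}: every event {xi n = v} is measurable and for every finite set of
   indices the joint law is the uniform product law. *)
Definition iid_uniform6 {d} {Omega : measurableType d} {R : realType}
  (P : probability Omega R) (xi : nat -> Omega -> 'I_6) : Prop :=
  (forall n (v : 'I_6), measurable [set w | xi n w = v]) /\
  (forall (S : seq nat) (v : nat -> 'I_6), uniq S ->
     P (\bigcap_(i in [set i | i \in S]) [set w | xi i w = v i]) =
     ((6%:R ^-1) ^+ size S)%:E).

From mathcomp Require Import all_boot all_order all_algebra.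
From mathcomp Require Import all_classical all_reals all_analysis.
From mathcomp Require Import ring lra zify.
Set Implicit Arguments.
Unset Strict Implicit.
Unset Printing Implicit Defensive.
Import Order.TTheory GRing.Theory Num.Theory.
Local Open Scope classical_set_scope.
Local Open Scope ring_scope.

(* Write [r] for [|AB|^2 / area].  Subdividing always into the first triangle
   [(A, D, G)] multiplies [r] by [3/2], and [r * J >= 4]; so from a triangle
   with [J <= X], a run of [2 X^2] such choices pushes [J] above [X].  Runs of
   a fixed length occur almost surely in disjoint blocks of i.i.d. choices,
   hence [J] cannot stay bounded. *)

Lemma bernoulli_ineq (R : realDomainType) (x : R) n :
  0 <= x -> 1 + n%:R * x <= (1 + x) ^+ n.
Proof.
move=> x0; elim: n => [|n IH]; first by rewrite mul0r addr0.
rewrite exprS -natr1 (le_trans _ (ler_wpM2l _ IH)) ?addr_ge0 //.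
by have := mulr_ge0 (mulr_ge0 (ler0n R n) x0) x0; lra.
Qed.

Section Geometry.
Variable R : realType.
Implicit Types t : triangle R.

Definition subdiv0 t := subdiv t ord0.

Definition J_real t :=
  (sqdist (tA t) (tB t) + sqdist (tB t) (tC t) + sqdist (tC t) (tA t)) / area t.

Definition AB_ratio t := sqdist (tA t) (tB t) / area t.

Lemma sqdist_ge0 (p q : R * R) : 0 <= sqdist p q.
Proof. by rewrite addr_ge0 ?sqr_ge0. Qed.

Lemma area_ge0 t : 0 <= area t.
Proof. exact: divr_ge0. Qed.

Lemma AB_ratio_ge0 t : 0 <= AB_ratio t.
Proof. by rewrite divr_ge0 ?area_ge0 ?sqdist_ge0. Qed.

Lemma J_le_EFin t s : (J t <= s%:E)%E -> area t != 0 /\ J_real t <= s.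
Proof.
by rewrite /J; case: eqP => [_|/eqP ht]; rewrite ?leye_eq // lee_fin.
Qed.

Lemma area_subdiv0 t : area (subdiv0 t) = area t / 6.
Proof.
rewrite /area /= /tA /tB /tC /midpoint /barycenter /=.
set x := (X in `|X| / 2 / 6).
rewrite (_ : _ - _ = x / 6); last by rewrite /x; field.
by rewrite normrM (@ger0_norm _ 6^-1) // mulrAC.
Qed.

Lemma sqdist_AB_subdiv0 t :
  sqdist (tA (subdiv0 t)) (tB (subdiv0 t)) = sqdist (tA t) (tB t) / 4.
Proof. by rewrite /sqdist /= /tA /tB /midpoint /=; field. Qed.

Lemma area_iter_subdiv0 t i : area t != 0 -> area (iter i subdiv0 t) != 0.
Proof.
by move=> ht; elim: i => //= i IH; rewrite area_subdiv0 mulf_neq0 ?invr_eq0.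
Qed.

(* The side AB is halved while the area is divided by 6. *)
Lemma AB_ratio_iter_subdiv0 t i : area t != 0 ->
  AB_ratio (iter i subdiv0 t) = (3 / 2) ^+ i * AB_ratio t.
Proof.
move=> ht; elim: i => [|i IH] /=; first by rewrite mul1r.
rewrite exprS -mulrA -IH /AB_ratio sqdist_AB_subdiv0 area_subdiv0.
by field; rewrite area_iter_subdiv0.
Qed.

Lemma AB_ratio_le_J_real t : AB_ratio t <= J_real t.
Proof.
rewrite ler_wpM2r ?invr_ge0 ?area_ge0 //.
by have := sqdist_ge0 (tB t) (tC t); have := sqdist_ge0 (tC t) (tA t); lra.
Qed.

(* Lagrange's identity: |AB|^2 |AC|^2 = (AB . AC)^2 + (AB x AC)^2. *)
Lemma area_sqr_le t :
  4 * area t ^+ 2 <= sqdist (tA t) (tB t) * sqdist (tC t) (tA t).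
Proof.
rewrite /area exprMn real_normK ?num_real // /sqdist.
set a := (tA t).1; set b := (tA t).2; set c := (tB t).1; set e := (tB t).2.
set f := (tC t).1; set g := (tC t).2.
rewrite -subr_ge0 (_ : _ - _ = ((c - a) * (f - a) + (e - b) * (g - b)) ^+ 2).
  exact: sqr_ge0.
by field.
Qed.

Lemma AB_ratio_mul_J_real_ge4 t : area t != 0 -> 4 <= AB_ratio t * J_real t.
Proof.
move=> ht; have hp : 0 < area t by rewrite lt_def ht area_ge0.
rewrite mulrACA -invfM ler_pdivlMr ?(mulr_gt0 hp hp) // -expr2.
apply: le_trans (area_sqr_le t) _; rewrite ler_wpM2l ?sqdist_ge0 //.
by have := sqdist_ge0 (tB t) (tC t); have := sqdist_ge0 (tA t) (tB t); lra.
Qed.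


(* Once [J] is at most [X], the ratio [|AB|^2 / area] is at least [4 / X],
   and [2 X^2] steps of [subdiv0] multiply it by [(3/2)^(2 X^2) >= 1 + X^2]. *)
Lemma J_real_iter_subdiv0_gt t (X : nat) : (0 < X)%N -> area t != 0 ->
  J_real t <= X%:R -> X%:R < J_real (iter (2 * X * X) subdiv0 t).
Proof.
move=> X0 ht hJ; have Xp : 0 < X%:R :> R by rewrite ltr0n.
have AB_ge : 4 / X%:R <= AB_ratio t.
  have := AB_ratio_mul_J_real_ge4 ht; have := AB_ratio_ge0 t.
  move: (AB_ratio t) => r r0 r4; rewrite ler_pdivrMr //.
  exact: le_trans r4 (ler_wpM2l r0 hJ).
have growth : 1 + X%:R * X%:R <= (3 / 2 : R) ^+ (2 * X * X).
  have := @bernoulli_ineq R 2^-1 (2 * X * X) ltac:(by rewrite invr_ge0).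
  have -> : 1 + 2^-1 = 3 / 2 :> R by field.
  by rewrite (_ : (2 * X * X)%:R * 2^-1 = X%:R * X%:R :> R) // !natrM; field.
apply: lt_le_trans (AB_ratio_le_J_real _).
rewrite AB_ratio_iter_subdiv0 //.
apply: lt_le_trans (ler_pM _ _ growth AB_ge);
  rewrite ?addr_ge0 ?mulr_ge0 ?divr_ge0 //.
have -> : (1 + X%:R * X%:R) * (4 / X%:R) = 4 / X%:R + 4 * X%:R :> R.
  by field; rewrite gt_eqF.
by have := divr_gt0 (ltr0n R 4) Xp; lra.
Qed.
End Geometry.

Lemma le_expr_le0 (R : archiRealFieldType) (x z : R) : `|z| < 1 ->
  (forall m, x <= z ^+ m) -> x <= 0.
Proof.
move=> z1 xz; rewrite leNgt; apply/negP => /(cvgr_lt _ (cvg_expr z1))[m _ hm].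
by have := hm m (leqnn m); rewrite ltNge xz.
Qed.

Section ZeroBlocks.
Context d (Omega : measurableType d) (R : realType) (P : probability Omega R)
  (xi : nat -> Omega -> 'I_6).
Hypothesis hxi : iid_uniform6 P xi.

Definition cylinder (S : seq nat) (v : nat -> 'I_6) : set Omega :=
  \bigcap_(i in [set i | i \in S]) [set w | xi i w = v i].

Lemma measurable_cylinder S v : measurable (cylinder S v).
Proof.
by apply: fin_bigcap_measurable; [exact: finite_seq | move=> i _; exact: hxi.1].
Qed.

Lemma cylinder_cat S S' v :
  cylinder (S ++ S') v = cylinder S v `&` cylinder S' v.
Proof.
apply/seteqP; split => w /=.
  by move=> h; split => i hi; apply: h; rewrite /= mem_cat hi ?orbT.
by move=> [h h'] i /=; rewrite mem_cat => /orP [/h | /h'].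
Qed.

Lemma eq_cylinder S v v' : {in S, v =1 v'} -> cylinder S v = cylinder S v'.
Proof.
by move=> vv'; apply/seteqP; split => w h i hi; rewrite /= ?vv' ?h // -?vv' ?h.
Qed.

Variables N L : nat.

Definition block j := iota (N + j * L) L.
Definition zero_block j := cylinder (block j) (fun _ => ord0).
Definition avoids_zero_blocks m :=
  [set w | forall j, (j < m)%N -> ~ zero_block j w].

Lemma avoids_zero_blocksS m :
  avoids_zero_blocks m.+1 = avoids_zero_blocks m `\` zero_block m.
Proof.
apply/seteqP; split => w /= h.
  by split=> [j jm|]; apply: h; lia.
move=> j; rewrite ltnS leq_eqVlt => /orP [/eqP -> | jm].
  exact: h.2.
exact: h.1 j jm.
Qed.

Lemma avoids_zero_blocks0 : avoids_zero_blocks 0 = setT.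
Proof. by apply/seteqP; split => w. Qed.

Lemma measurable_avoids_zero_blocks m : measurable (avoids_zero_blocks m).
Proof.
elim: m => [|m IH]; first by rewrite avoids_zero_blocks0.
rewrite avoids_zero_blocksS; apply: measurableD => //.
exact: measurable_cylinder.
Qed.

Lemma cylinder_zero_block m S v : {in S, forall i, N + m.+1 * L <= i}%N ->
  cylinder S v `&` zero_block m =
  cylinder (block m ++ S)
    (fun i => if (i < N + m.+1 * L)%N then ord0 else v i).
Proof.
move=> hS; rewrite cylinder_cat setIC; congr (_ `&` _); apply: eq_cylinder => i.
  by rewrite mem_iota => hi; rewrite ifT //; lia.
by move=> /hS hi; rewrite ifF //; lia.
Qed.

(* [S] collects coordinates beyond the first [m] blocks; peeling off the last
   block keeps the induction inside cylinders on disjoint index sets. *)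
Lemma probability_avoids_cylinder m S v :
  uniq S -> {in S, forall i, N + m * L <= i}%N ->
  P (avoids_zero_blocks m `&` cylinder S v) =
  ((1 - 6%:R^-1 ^+ L) ^+ m * 6%:R^-1 ^+ size S)%:E.
Proof.
elim: m S v => [|m IH] S v uS hS.
  by rewrite avoids_zero_blocks0 setTI mul1r; exact: hxi.2.
have mA : measurable (avoids_zero_blocks m `&` cylinder S v).
  exact: measurableI
    (measurable_avoids_zero_blocks m) (measurable_cylinder S v).
rewrite avoids_zero_blocksS setIDAC setIDA measureD //; last 2 first.
- exact: measurable_cylinder.
- by rewrite ltey_eq fin_num_measure.
rewrite -setIA cylinder_zero_block //.
have u' : uniq (block m ++ S).
  rewrite cat_uniq uS iota_uniq andbT /=; apply/hasPn => i /hS.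
  by rewrite mem_iota; lia.
have hmS : {in block m ++ S, forall i, N + m * L <= i}%N.
  by move=> i; rewrite mem_cat mem_iota => /orP [|/hS]; lia.
have hSm : {in S, forall i, N + m * L <= i}%N by move=> i /hS; lia.
apply: eq_trans (congr2 (fun a b => a - b)%E (IH S v uS hSm) (IH _ _ u' hmS)) _.
by rewrite -EFinB size_cat size_iota exprD exprS; congr (_%:E); ring.
Qed.

Lemma probability_avoids_zero_blocks m :
  P (avoids_zero_blocks m) = ((1 - 6%:R^-1 ^+ L) ^+ m)%:E.
Proof.
have := @probability_avoids_cylinder m [::] (fun _ => ord0) erefl
  (fun i => ltac:(by [])).
rewrite expr0 mulr1 => <-; congr (P _).
by apply/seteqP; split=> w //= [].
Qed.

Lemma avoids_all_zero_blocks_negligible :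
  P.-negligible (\bigcap_m avoids_zero_blocks m).
Proof.
have mB : measurable (\bigcap_m avoids_zero_blocks m).
  exact: bigcapT_measurable measurable_avoids_zero_blocks.
exists (\bigcap_m avoids_zero_blocks m); split => //.
apply/eqP; rewrite eq_le measure_ge0 andbT -(fineK (fin_num_measure P _ mB)).
rewrite lee_fin; apply: (@le_expr_le0 _ _ (1 - 6%:R^-1 ^+ L)).
  have q0 : 0 < 6%:R^-1 ^+ L :> R by rewrite exprn_gt0 // invr_gt0.
  have q1 : 6%:R^-1 ^+ L <= 1 :> R by rewrite exprn_ile1 // invf_le1 // ler1n.
  by rewrite ger0_norm ?subr_ge0 // ltrBlDr ltrDl.
move=> m; rewrite -lee_fin fineK ?fin_num_measure //.
rewrite -probability_avoids_zero_blocks.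
apply: le_measure; rewrite ?inE //; last by move=> w /(_ m I).
exact: measurable_avoids_zero_blocks.
Qed.
End ZeroBlocks.

Lemma chain_add_zeros (R : realType) (T0 : triangle R) f n i :
  (forall k, (k < i)%N -> f (n + k)%N = ord0) ->
  chain T0 f (n + i) = iter i (@subdiv0 R) (chain T0 f n).
Proof.
elim: i => [|i IH] f0; first by rewrite addn0.
rewrite addnS /= IH ?f0 // => k ki; apply: f0; lia.
Qed.

Lemma limn_esup_neqy_bounded (R : realType) (u : (\bar R)^nat) :
  limn_esup u != +oo%E ->
  exists s : R, exists N, forall k, (N <= k)%N -> (u k <= s%:E)%E.
Proof.
move=> hu; have : (ereal_inf (range (esups u)) < +oo)%E.
  by rewrite -(cvg_lim _ (@cvg_esups_inf R u)) // -limn_esup_lim ltey.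
move=> /ereal_inf_lt [_ [N _ <-] hN].
have ub k : (N <= k)%N -> (u k <= esups u N)%E.
  by move=> Nk; apply: ereal_sup_ubound; exists k.
case: (esups u N) hN ub => [s _ ub | // | _ ub]; first by exists s, N.
by exists 0, N => k /ub /le_trans; apply; rewrite leNye.
Qed.

Section BoundedChain.
Context d (Omega : measurableType d) (R : realType) (xi : nat -> Omega -> 'I_6).
Variables (T0 : triangle R) (w : Omega) (s : R) (N : nat).
Hypothesis J_bounded :
  forall k, (N <= k)%N -> (J (chain T0 (fun k => xi k w) k) <= s%:E)%E.

Lemma bounded_chain_avoids_zero_blocks (X := (Num.truncn (Num.max s 0)).+1) :
  (\bigcap_m avoids_zero_blocks xi N (2 * X * X) m) w.
Proof.
move=> m _ j _ zero_j; set L := (2 * X * X)%N.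
set t := chain T0 (fun k => xi k w) (N + j * L).
have sX : s < X%:R by apply: le_lt_trans (truncnS_gt _); rewrite le_max lexx.
have [ht Jt] := J_le_EFin (J_bounded (leq_addr (j * L) N)).
have [_ JL] := J_le_EFin (J_bounded (leq_addr (j * L + L) N)).
rewrite addnA chain_add_zeros -/t in JL; last first.
  by move=> k kL; apply: zero_j; rewrite /= mem_iota; lia.
have := J_real_iter_subdiv0_gt (ltn0Sn _) ht (le_trans Jt (ltW sX)).
by rewrite -/L ltNge (le_trans JL (ltW sX)).
Qed.
End BoundedChain.

Theorem proposition4 (d : measure_display) (Omega : measurableType d)
  (R : realType) (P : probability Omega R) (xi : nat -> Omega -> 'I_6)
  (T0 : triangle R) :
  not_all_equal T0 -> iid_uniform6 P xi ->
  {ae P, forall w, limn_esup (fun n => J (chain T0 (fun k => xi k w) n)) = +oo%E}.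
Proof.
(* For flat triangles [J = +oo]. *)
move=> _ hxi.
pose bad X N := \bigcap_m avoids_zero_blocks xi N (2 * X * X) m.
apply: (@negligibleS _ _ _ _ (\bigcup_X \bigcup_N bad X N)).
  move=> w /= /eqP /limn_esup_neqy_bounded [s [N J_bounded]].
  exists (Num.truncn (Num.max s 0)).+1 => //; exists N => //.
  exact: bounded_chain_avoids_zero_blocks J_bounded.
apply: negligible_bigcup => X; apply: negligible_bigcup => N.
exact: avoids_all_zero_blocks_negligible.
Qed.
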